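(* Let $a,r>0$, $\beta\in\mathbb{R}$, $\theta\in(\theta_0,\frac\pi2)$ with $\tan\theta_0\ge\frac{|\beta|}{\sqrt2}$, and $\lambda\in\Sigma_{\theta,r}$. Then for all $\xi'\in\mathbb{R}^{N-1}$ and $j=1,2$, $${\rm Re}(L_j)\ge C(a,\beta,\theta,r)\big(|\lambda|^{1/2}+1+|\xi'|\big).$$
   Context: $\Sigma_{\theta,r}=\{z\in\mathbb{C}\setminus\{0\}:|\arg z|<\pi-\theta,|z|>r\}$. $z_{1,2}(\lambda)=\frac{2\lambda+a(1+\beta^2/2)\pm\sqrt{a^2(1+\beta^2/2)^2-2\lambda^2\beta^2}}{2(1+\beta^2/2)}$ and $L_j(\lambda,\xi')=\sqrt{|\xi'|^2+z_j(\lambda)}$, the square root with positive real part. *)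

From HB Require Import structures.
From mathcomp Require Import all_boot all_order all_algebra.
From mathcomp Require Import all_classical all_reals all_analysis.
From mathcomp Require Import complex.
Set Implicit Arguments. Unset Strict Implicit. Unset Printing Implicit Defensive.
Import Order.TTheory GRing.Theory Num.Theory.
Local Open Scope ring_scope.
Local Open Scope complex_scope.

Section Defs.
Variable R : realType.

Definition cmod (z : R[i]) : R :=
  Num.sqrt (complex.Re z ^+ 2 + complex.Im z ^+ 2).

(* principal argument Arg z in (-pi, pi] (Arg 0 := 0) *)
Definition carg (z : R[i]) : R :=
  let x := complex.Re z in let y := complex.Im z in
  if 0 < x then atan (y / x)
  else if x < 0 then (if 0 <= y then atan (y / x) + pi else atan (y / x) - pi)
  else if 0 < y then pi / 2 else if y < 0 then - (pi / 2) else 0.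

Definition Sigma (theta r : R) : set R[i] :=
  [set z | z != 0 /\ `|carg z| < pi - theta /\ r < cmod z].

(* the square root with nonnegative real part (principal square root):
   sqrt w = sqrt((|w|+Re w)/2) + i sgn(Im w) sqrt((|w|-Re w)/2), sgn 0 := 1 *)
Definition csqrt (w : R[i]) : R[i] :=
  let x := complex.Re w in let y := complex.Im w in
  (Num.sqrt ((cmod w + x) / 2)) +i*
  ((if 0 <= y then 1 else -1) * Num.sqrt ((cmod w - x) / 2)).

(* z_j(lambda), j = 1 (+ sign), j = 2 (- sign) *)
Definition zj (a beta : R) (j : bool) (lam : R[i]) : R[i] :=
  let b := (1 + beta ^+ 2 / 2)%:C in
  let d := csqrt ((a%:C) ^+ 2 * b ^+ 2 - 2%:R * lam ^+ 2 * (beta%:C) ^+ 2) in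
  (2%:R * lam + a%:C * b + (if j then d else - d)) / (2%:R * b).

Definition vnorm (n : nat) (xi : 'rV[R]_n) : R :=
  Num.sqrt (\sum_(i < n) xi 0 i ^+ 2).

Definition Lj (a beta : R) (j : bool) (lam : R[i]) (n : nat) (xi : 'rV[R]_n)
  : R[i] := csqrt ((vnorm xi ^+ 2)%:C + zj a beta j lam).

End Defs.

From HB Require Import structures.
From mathcomp Require Import all_boot all_order all_algebra.
From mathcomp Require Import all_classical all_reals all_analysis.
From mathcomp Require Import complex.
From mathcomp Require Import ring lra.
Set Implicit Arguments. Unset Strict Implicit. Unset Printing Implicit Defensive.
Import Order.TTheory GRing.Theory Num.Theory.
Local Open Scope ring_scope.
Local Open Scope classical_set_scope.
Local Open Scope complex_scope.

(* For t >= 0 the product (z_1 + t)(z_2 + t) equals, up to the factor 1 + beta^2/2,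
   the quadratic (lam + t)(lam + t + a) + (beta^2/2) t (t + a) in lam.  Its roots -u
   satisfy Re u >= t and |Im u| <= (|beta|/sqrt 2) Re u, i.e. they lie in a sector
   around the negative axis which is strictly narrower than the complement of
   Sigma_theta; hence |lam + u| >~ |lam| + t + 1 for lam in Sigma_{theta,r}.  Together
   with |z_j| <~ |lam| + 1 this gives |z_j + t| >~ |lam| + 1 for every t >= 0: z_j keeps
   a distance of order |lam| + 1 from the half-line (-oo, 0], so |z_j| + Re z_j >~
   |lam| + 1.  Finally Re (sqrt w) = sqrt ((|w| + Re w) / 2) and, for
   w = |xi'|^2 + z_j, |w| + Re w >~ |lam| + 1 + |xi'|^2. *)

Local Notation Re := complex.Re.
Local Notation Im := complex.Im.

Section ComplexModulus.
Variable R : realType.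
Implicit Types (z w : R[i]) (x : R).

Lemma ReD z w : Re (z + w) = Re z + Re w. Proof. by case: z; case: w. Qed.

Lemma ImD z w : Im (z + w) = Im z + Im w. Proof. by case: z; case: w. Qed.

Lemma cmodE z : `|z| = (cmod z)%:C.
Proof. by rewrite normc_def. Qed.

Lemma cmod_ge0 z : 0 <= cmod z.
Proof. exact: sqrtr_ge0. Qed.

Lemma cmodM z w : cmod (z * w) = cmod z * cmod w.
Proof. by have := normrM z w; rewrite !cmodE -rmorphM => /complexI. Qed.

Lemma ler_cmodD z w : cmod (z + w) <= cmod z + cmod w.
Proof. by have := ler_normD z w; rewrite !cmodE -rmorphD lecR. Qed.

Lemma cmodN z : cmod (- z) = cmod z.
Proof. by case: z => x y; rewrite /cmod /= !sqrrN. Qed.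

Lemma cmod_real x : cmod x%:C = `|x|.
Proof. by rewrite /cmod /= expr0n /= addr0 sqrtr_sqr. Qed.

Lemma cmod_nat n : cmod (n%:R : R[i]) = n%:R.
Proof. by rewrite -(rmorph_nat (real_complex R)) cmod_real ger0_norm. Qed.

Lemma ler_normRe_cmod z : `|Re z| <= cmod z.
Proof. by rewrite /cmod -sqrtr_sqr; apply: ler_wsqrtr; rewrite lerDl sqr_ge0. Qed.

Lemma ler_normIm_cmod z : `|Im z| <= cmod z.
Proof. by rewrite /cmod -sqrtr_sqr; apply: ler_wsqrtr; rewrite lerDr sqr_ge0. Qed.

Lemma cmod_le_normRe_Im z : cmod z <= `|Re z| + `|Im z|.
Proof.
rewrite /cmod -[leRHS]ger0_norm ?addr_ge0 // -sqrtr_sqr; apply: ler_wsqrtr.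
rewrite sqrrD -(real_normK (num_real (Re z))) -(real_normK (num_real (Im z))).
have := mulr_ge0 (normr_ge0 (Re z)) (normr_ge0 (Im z)); lra.
Qed.

Lemma cmod_subRe_addRe z : (cmod z - Re z) * (cmod z + Re z) = Im z ^+ 2.
Proof. by rewrite -subr_sqr sqr_sqrtr ?addr_ge0 ?sqr_ge0 //; ring. Qed.

Lemma cmod_Re_shift z : cmod (z + (- Re z)%:C) = `|Im z|.
Proof. by case: z => x y; rewrite /cmod /= subrr expr0n /= add0r addr0 sqrtr_sqr. Qed.

Lemma csqrtE w : csqrt w = sqrtc w.
Proof.
case: w => x y; rewrite /csqrt /sqrtc /=; congr (_ +i* (_ * _)).
have [->|y_neq0] := eqVneq y 0; first by rewrite lexx.
case: ifP => y_sign; apply/esym/eqP.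
  by rewrite sgr_cp0 lt_neqAle eq_sym y_neq0 y_sign.
by rewrite sgr_cp0 ltNge y_sign.
Qed.

Lemma sqr_csqrt w : csqrt w ^+ 2 = w.
Proof. by rewrite csqrtE sqr_sqrtc. Qed.

Lemma cmod_csqrt w : cmod (csqrt w) = Num.sqrt (cmod w).
Proof. by rewrite -{2}[w]sqr_csqrt expr2 cmodM -expr2 sqrtr_sqr ger0_norm // cmod_ge0. Qed.

End ComplexModulus.

Lemma exists_sector_weight (R : realFieldType) (sig T : R) : 0 <= sig -> sig < T ->
  exists k, [/\ 0 < k, 1 < k * T & k * sig < 1].
Proof.
move=> sig_ge0 sig_lt_T; exists (2 / (T + sig)).
have sum_gt0 : 0 < T + sig by lra.
rewrite divr_gt0 //; split=> //; rewrite mulrAC.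
  by rewrite ltr_pdivlMr //; lra.
by rewrite ltr_pdivrMr //; lra.
Qed.

Section Sector.
Variable R : realType.

Lemma tan_normRe_lt_normIm (theta : R) (z : R[i]) : 0 < theta -> theta < pi / 2 ->
  Re z < 0 -> `|carg z| < pi - theta -> tan theta * `|Re z| < `|Im z|.
Proof.
move=> th_gt0 th_lt Re_lt0; rewrite /carg /=.
have -> : (0 < Re z) = false by apply/negbTE; rewrite -leNgt ltW.
rewrite Re_lt0.
have pi_gt0 := pi_gt0 R.
have /tanK tanK : theta \in `](- (pi / 2)), (pi / 2)[%R by rewrite in_itv /=; apply/andP; split; lra.
set x := Re z; set y := Im z.
have atan_gt := atan_gtNpi2 (y / x); have atan_lt := atan_ltpi2 (y / x).
rewrite (ler0_norm (ltW Re_lt0)); case: ifP => y_ge0.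
  rewrite ger0_norm; last by lra.
  move=> harg; rewrite (ger0_norm y_ge0) ltNge; apply/negP => hle.
  have : atan (- tan theta) <= atan (y / x).
    by apply: le_atan; rewrite ler_ndivlMr //; lra.
  rewrite atanN tanK; lra.
rewrite ler0_norm; last by lra.
move=> harg; have y_lt0 : y < 0 by rewrite ltNge y_ge0.
rewrite (ltr0_norm y_lt0) ltNge; apply/negP => hle.
have : atan (y / x) <= atan (tan theta).
  by apply: le_atan; rewrite ler_ndivrMr //; lra.
rewrite tanK; lra.
Qed.

Lemma sector_weighted_Re_ge (theta k : R) : 0 < theta -> theta < pi / 2 ->
  0 < k -> 1 < k * tan theta ->
  exists2 m : R, 0 < m &
    forall z : R[i], `|carg z| < pi - theta -> m * cmod z <= Re z + k * `|Im z|.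
Proof.
move=> th_gt0 th_lt k_gt0 kT; set T := tan theta in kT *.
have T_gt0 : 0 < T by rewrite -(pmulr_rgt0 _ k_gt0); lra.
set m := Num.min (Num.min 1 k) ((k * T - 1) / (1 + T)).
have m_gt0 : 0 < m by rewrite !lt_min ltr01 k_gt0 divr_gt0 //; lra.
have m_le1 : m <= 1 by rewrite /m !ge_min lexx.
have m_lek : m <= k by rewrite /m !ge_min lexx orbT.
have m_le : m * (1 + T) <= k * T - 1.
  by rewrite -ler_pdivlMr; [rewrite /m ge_min lexx orbT | lra].
exists m => // z harg.
have cmod_le : m * cmod z <= m * `|Re z| + m * `|Im z|.
  by rewrite -mulrDr ler_wpM2l ?(ltW m_gt0) ?cmod_le_normRe_Im.
have Im_le : m * `|Im z| <= k * `|Im z| := ler_wpM2r (normr_ge0 _) m_lek.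
have [Re_lt0 | Re_ge0] := ltrP (Re z) 0.
- have := tan_normRe_lt_normIm th_gt0 th_lt Re_lt0 harg; rewrite -/T => hT.
  have : 0 <= (k - m) * (`|Im z| - T * `|Re z|) by apply: mulr_ge0; rewrite subr_ge0 // ltW.
  have : 0 <= `|Re z| * (k * T - 1 - m * (1 + T)) by apply: mulr_ge0; rewrite // subr_ge0.
  rewrite (ltr0_norm Re_lt0) in cmod_le hT *; nra.
- have : m * `|Re z| <= `|Re z| by rewrite -[leRHS]mul1r; exact: ler_wpM2r.
  rewrite (ger0_norm Re_ge0) in cmod_le *; lra.
Qed.

End Sector.

Section ShiftedQuadratic.
Variable R : realType.

Definition shifted_quadratic (a s t : R) (z : R[i]) : R[i] :=
  (z + t%:C) * (z + t%:C + a%:C) + (s * (t * (t + a)))%:C.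

Lemma cmod_add_sector_ge (k sig m t : R) (z u : R[i]) : 0 <= k -> k * sig <= 1 ->
  m * cmod z <= Re z + k * `|Im z| -> t <= Re u -> `|Im u| <= sig * Re u ->
  m * cmod z + (1 - k * sig) * t <= (1 + k) * cmod (z + u).
Proof.
move=> k_ge0 ksig_le1 z_sector t_le u_sector.
have Re_le : Re z + Re u <= cmod (z + u).
  by rewrite -ReD; apply: le_trans (ler_norm _) (ler_normRe_cmod _).
have Im_le : `|Im z| <= cmod (z + u) + sig * Re u.
  have := ler_normD (Im z + Im u) (- Im u); rewrite addrK normrN -ImD.
  by move/le_trans; apply; rewrite lerD ?ler_normIm_cmod.
have : k * `|Im z| <= k * cmod (z + u) + k * (sig * Re u).
  by rewrite -mulrDr; apply: ler_wpM2l.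
have : (1 - k * sig) * t <= (1 - k * sig) * Re u.
  by apply: ler_wpM2l; rewrite // subr_ge0.
rewrite mulrDl mul1r; nra.
Qed.

Lemma shifted_quadratic_factor (a s t : R) : 0 <= a -> 0 <= s -> 0 <= t ->
  exists u1 u2 : R[i],
    [/\ forall z, shifted_quadratic a s t z = (z + u1) * (z + u2),
        t <= Re u1 /\ `|Im u1| <= Num.sqrt s * Re u1
      & t <= Re u2 /\ `|Im u2| <= Num.sqrt s * Re u2].
Proof.
move=> a_ge0 s_ge0 t_ge0.
set tau := t + a / 2; set D := (a / 2) ^+ 2 - s * (t * (t + a)).
have P_ge0 : 0 <= s * (t * (t + a)) by rewrite !mulr_ge0 // addr_ge0.
have sqrt_s_ge0 := sqrtr_ge0 s.
suff [u1 [u2 [sum_u prod_u u1_sector u2_sector]]] : exists u1 u2 : R[i],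
    [/\ u1 + u2 = (2 * t + a)%:C, u1 * u2 = ((1 + s) * (t * (t + a)))%:C,
        t <= Re u1 /\ `|Im u1| <= Num.sqrt s * Re u1
      & t <= Re u2 /\ `|Im u2| <= Num.sqrt s * Re u2].
  exists u1, u2; split=> // z; rewrite /shifted_quadratic.
  have -> : (z + u1) * (z + u2) = z ^+ 2 + (u1 + u2) * z + u1 * u2 by ring.
  by rewrite sum_u prod_u !(rmorphD, rmorphM) /= ?rmorph1 ?rmorph_nat; ring.
have tau_ge_t : t <= tau by rewrite /tau lerDl divr_ge0.
have [D_ge0 | D_lt0] := lerP 0 D.
- set e := Num.sqrt D.
  have e_ge0 : 0 <= e := sqrtr_ge0 D.
  have e_le : e <= a / 2.
    rewrite -[a / 2]ger0_norm ?divr_ge0 // -sqrtr_sqr; apply: ler_wsqrtr.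
    by rewrite /D; lra.
  have t_le : t <= tau - e by rewrite /tau; lra.
  exists (tau - e)%:C, (tau + e)%:C; split.
  + by rewrite -rmorphD; congr _%:C; rewrite /tau; field.
  + rewrite -rmorphM; congr _%:C.
    have -> : (tau - e) * (tau + e) = tau ^+ 2 - e ^+ 2 by ring.
    by rewrite sqr_sqrtr // /D /tau; field.
  + by rewrite /= normr0; split=> //; apply: mulr_ge0 => //; lra.
  + by rewrite /= normr0; split; [lra | apply: mulr_ge0 => //; lra].
- set h := Num.sqrt (- D).
  have h_ge0 : 0 <= h := sqrtr_ge0 (- D).
  have h_sqr : h ^+ 2 = - D by rewrite sqr_sqrtr // oppr_ge0 ltW.
  have h_le : h <= Num.sqrt s * tau.
    rewrite -[_ * tau]ger0_norm ?mulr_ge0 //; last by lra.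
    rewrite -sqrtr_sqr exprMn sqr_sqrtr //; apply: ler_wsqrtr; rewrite /D /tau.
    have : 0 <= s * (a / 2) ^+ 2 by rewrite mulr_ge0 ?sqr_ge0.
    nra.
  exists (tau +i* h), (tau +i* - h); split.
  + apply/eqP; rewrite eq_complex /= addrN eqxx andbT; apply/eqP.
    by rewrite /tau; field.
  + apply/eqP; rewrite eq_complex /=; apply/andP; split; apply/eqP; last by ring.
    have -> : tau * tau - h * - h = tau ^+ 2 + h ^+ 2 by ring.
    by rewrite h_sqr /D /tau; field.
  + by rewrite /= ger0_norm.
  + by rewrite /= normrN ger0_norm.
Qed.

End ShiftedQuadratic.

Section ZjBounds.
Variables (R : realType) (a beta : R).

Lemma zj_shift_prod (t : R) (lam : R[i]) :
  (1 + beta ^+ 2 / 2)%:C * (zj a beta true lam + t%:C) * (zj a beta false lam + t%:C)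
  = shifted_quadratic a (beta ^+ 2 / 2) t lam.
Proof.
rewrite /zj /shifted_quadratic; set b := (1 + beta ^+ 2 / 2)%:C; set d := csqrt _.
have d_sqr : d ^+ 2 = a%:C ^+ 2 * b ^+ 2 - 2%:R * lam ^+ 2 * beta%:C ^+ 2.
  exact: sqr_csqrt.
have b_sub1 : b - 1 = (beta ^+ 2 / 2)%:C by rewrite /b rmorphD rmorph1 addrC addKr.
have b_neq0 : b != 0.
  by rewrite fmorph_eq0 gt_eqF //; have := sqr_ge0 beta; lra.
have beta_sqr : beta%:C ^+ 2 = 2 * (b - 1).
  by rewrite b_sub1 rmorphM fmorphV rmorphXn rmorph_nat; field.
have -> : (beta ^+ 2 / 2 * (t * (t + a)))%:C = (b - 1) * (t%:C * (t%:C + a%:C)).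
  by rewrite b_sub1 !rmorphM rmorphD.
clearbody d b; set p := 2%:R * lam + a%:C * b.
have -> : b * ((p + d) / (2%:R * b) + t%:C) * ((p + - d) / (2%:R * b) + t%:C)
    = ((p + 2 * b * t%:C) ^+ 2 - d ^+ 2) / (4 * b).
  by field; rewrite ?mulf_neq0 ?b_neq0 ?pnatr_eq0.
by rewrite d_sqr beta_sqr /p; field; rewrite ?b_neq0 ?pnatr_eq0.
Qed.

Lemma cmod_zj_le (j : bool) (lam : R[i]) : 0 < a ->
  cmod (zj a beta j lam) <= (1 + `|beta| + a) * (cmod lam + 1).
Proof.
move=> a_gt0; set b := 1 + beta ^+ 2 / 2.
have b_ge1 : 1 <= b by rewrite /b lerDl divr_ge0 ?sqr_ge0.
have b_gt0 : 0 < b by lra.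
have lam_ge0 := cmod_ge0 lam; have beta_ge0 := normr_ge0 beta.
pose d := csqrt (a%:C ^+ 2 * b%:C ^+ 2 - 2%:R * lam ^+ 2 * beta%:C ^+ 2).
have d_le : cmod d <= a * b + 2 * `|beta| * cmod lam.
  rewrite /d cmod_csqrt -[leRHS]ger0_norm; last by rewrite addr_ge0 ?mulr_ge0 // ltW.
  rewrite -sqrtr_sqr; apply: ler_wsqrtr; apply: le_trans (ler_cmodD _ _) _.
  rewrite cmodN !expr2 !cmodM !cmod_real cmod_nat (ger0_norm (ltW a_gt0)) (ger0_norm (ltW b_gt0)).
  have := mulr_ge0 (mulr_ge0 (ltW a_gt0) (ltW b_gt0)) (mulr_ge0 beta_ge0 lam_ge0).
  have := sqr_ge0 (`|beta| * cmod lam); nra.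
have num_le : cmod (2%:R * lam + a%:C * b%:C + (if j then d else - d))
    <= 2 * (a * b + (1 + `|beta|) * cmod lam).
  apply: le_trans (ler_cmodD _ _) _.
  have -> : cmod (if j then d else - d) = cmod d by case: j; rewrite ?cmodN.
  apply: le_trans (lerD (ler_cmodD _ _) d_le) _.
  by rewrite !cmodM cmod_nat !cmod_real (ger0_norm (ltW a_gt0)) (ger0_norm (ltW b_gt0)); lra.
have zj_mul : zj a beta j lam * (2%:R * b%:C) = 2%:R * lam + a%:C * b%:C + (if j then d else - d).
  by rewrite /zj /= -/d divfK // mulf_neq0 ?pnatr_eq0 // fmorph_eq0 gt_eqF.
have zj_le : cmod (zj a beta j lam) <= a + (1 + `|beta|) * cmod lam.
  rewrite -(ler_pM2r (_ : 0 < 2 * b)); last by rewrite mulr_gt0.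
  have := cmodM (zj a beta j lam) (2%:R * b%:C).
  rewrite zj_mul cmodM cmod_nat cmod_real (ger0_norm (ltW b_gt0)) => <-.
  apply: le_trans num_le _.
  have : (1 + `|beta|) * cmod lam <= (1 + `|beta|) * cmod lam * b.
    by rewrite ler_peMr // mulr_ge0 //; lra.
  lra.
apply: le_trans zj_le _.
have := mulr_ge0 (ltW a_gt0) lam_ge0; lra.
Qed.

End ZjBounds.

Section ZjLowerBound.
Variables (R : realType) (a beta k m r : R).

Lemma cmod_shifted_quadratic_ge : 0 < a -> 0 <= k -> 0 < m -> 0 < r ->
    k * Num.sqrt (beta ^+ 2 / 2) < 1 ->
  exists2 c : R, 0 < c &
  forall (lam : R[i]) (t : R), 0 <= t -> m * cmod lam <= Re lam + k * `|Im lam| ->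
    r < cmod lam ->
    (c * (cmod lam + t + 1)) ^+ 2
      <= cmod (shifted_quadratic a (beta ^+ 2 / 2) t lam).
Proof.
move=> a_gt0 k_ge0 m_gt0 r_gt0; set sig := Num.sqrt (beta ^+ 2 / 2) => ksig_lt1.
set c1 := Num.min (m * r / (r + 1)) (1 - k * sig).
have r1_gt0 : 0 < r + 1 by lra.
have c1_gt0 : 0 < c1 by rewrite lt_min subr_gt0 ksig_lt1 andbT divr_gt0 ?mulr_gt0.
have c1_le_mr : c1 <= m * r / (r + 1) by rewrite ge_min lexx.
have c1_le_sig : c1 <= 1 - k * sig by rewrite ge_min lexx orbT.
exists (c1 / (1 + k)); first by rewrite divr_gt0 //; lra.
move=> lam t t_ge0 lam_sector lam_r.
have [u1 [u2 [-> u1_sector u2_sector]]] :=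
  shifted_quadratic_factor (ltW a_gt0) (divr_ge0 (sqr_ge0 beta) (ler0n R 2)) t_ge0.
have c1_le : c1 * (cmod lam + t + 1) <= m * cmod lam + (1 - k * sig) * t.
  have : c1 * t <= (1 - k * sig) * t by apply: ler_wpM2r.
  have : c1 * (r + 1) <= m * r by rewrite -ler_pdivlMr.
  have : 0 <= (m - c1) * (cmod lam - r).
    apply: mulr_ge0; last by lra.
    rewrite subr_ge0; apply: le_trans c1_le_mr _.
    by rewrite ler_pdivrMr // ler_pM2l //; lra.
  nra.
have near_root u : t <= Re u /\ `|Im u| <= sig * Re u ->
    0 <= c1 / (1 + k) * (cmod lam + t + 1) <= cmod (lam + u).
  move=> [t_le_u u_sector]; apply/andP; split.
    by rewrite !mulr_ge0 ?invr_ge0 ?addr_ge0 ?cmod_ge0 // ltW.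
  rewrite mulrAC ler_pdivrMr; last by lra.
  apply: le_trans c1_le _; rewrite [leRHS]mulrC.
  by apply: cmod_add_sector_ge => //; apply: ltW.
have /andP[u1_ge0 u1_le] := near_root _ u1_sector.
have /andP[u2_ge0 u2_le] := near_root _ u2_sector.
by rewrite cmodM expr2; apply: ler_pM.
Qed.

Lemma cmod_zj_shift_ge : 0 < a -> 0 <= k -> 0 < m -> 0 < r ->
    k * Num.sqrt (beta ^+ 2 / 2) < 1 ->
  exists2 c : R, 0 < c &
  forall (lam : R[i]) (j : bool) (t : R), 0 <= t ->
    m * cmod lam <= Re lam + k * `|Im lam| -> r < cmod lam ->
    c * (cmod lam + 1) <= cmod (zj a beta j lam + t%:C).
Proof.
move=> a_gt0 k_ge0 m_gt0 r_gt0 ksig_lt1.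
have [c c_gt0 quadratic_ge] := cmod_shifted_quadratic_ge a_gt0 k_ge0 m_gt0 r_gt0 ksig_lt1.
set b := 1 + beta ^+ 2 / 2; set M := 1 + `|beta| + a.
have b_gt0 : 0 < b by rewrite /b; have := sqr_ge0 beta; lra.
have M_ge1 : 1 <= M by rewrite /M; have := normr_ge0 beta; lra.
exists (c ^+ 2 / (b * M)); first by rewrite divr_gt0 ?exprn_gt0 ?mulr_gt0 //; lra.
move=> lam j t t_ge0 lam_sector lam_r.
have prod_AB j' : b * (cmod (zj a beta j' lam + t%:C) * cmod (zj a beta (~~ j') lam + t%:C))
    = cmod (shifted_quadratic a (beta ^+ 2 / 2) t lam).
  rewrite -zj_shift_prod !cmodM cmod_real ger0_norm; last exact: ltW.
  by rewrite /b; case: j' => /=; ring.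
set A := cmod (zj a beta j lam + t%:C); set B := cmod (zj a beta (~~ j) lam + t%:C).
set Y := cmod lam + t + 1.
have lam_ge0 := cmod_ge0 lam.
have Y_gt0 : 0 < Y by rewrite /Y; lra.
have A_ge0 : 0 <= A by apply: cmod_ge0.
have B_le : B <= M * Y.
  apply: le_trans (ler_cmodD _ _) _; rewrite cmod_real ger0_norm //.
  have := cmod_zj_le beta (~~ j) lam a_gt0; rewrite -/M /Y.
  have : t <= M * t by rewrite ler_peMl.
  nra.
have cY_le : c ^+ 2 * Y * Y <= (b * M * A) * Y.
  have -> : c ^+ 2 * Y * Y = (c * Y) ^+ 2 by ring.
  rewrite (le_trans (quadratic_ge lam t t_ge0 lam_sector lam_r)) // -(prod_AB j).
  have -> : b * M * A * Y = b * A * (M * Y) by ring.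
  by rewrite mulrA ler_wpM2l ?mulr_ge0 //; lra.
rewrite ler_pM2r // in cY_le.
rewrite mulrAC ler_pdivrMr ?mulr_gt0 //; last by lra.
have : c ^+ 2 * (cmod lam + 1) <= c ^+ 2 * Y by rewrite ler_wpM2l ?sqr_ge0 // /Y; lra.
by move/le_trans; apply; rewrite [leRHS]mulrC.
Qed.

End ZjLowerBound.

Section ReSqrt.
Variable R : realType.

Lemma cmod_addRe_ge (M c : R) : 0 < M -> 0 < c ->
  exists2 kap : R, 0 < kap &
    forall (z : R[i]) (L : R), 0 < L -> cmod z <= M * L ->
    (forall t : R, 0 <= t -> c * L <= cmod (z + t%:C)) -> kap * L <= cmod z + Re z.
Proof.
move=> M_gt0 c_gt0; set kap := Num.min c (c ^+ 2 / (2 * M)).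
exists kap; first by rewrite lt_min c_gt0 divr_gt0 ?exprn_gt0 ?mulr_gt0.
move=> z L L_gt0 z_le shift_ge.
have z_ge0 := cmod_ge0 z; have Re_le := ler_normRe_cmod z.
have [Re_ge0 | Re_lt0] := lerP 0 (Re z).
- have := shift_ge 0 (lexx 0); rewrite rmorph0 addr0 => cL_le.
  have : kap * L <= c * L by rewrite ler_wpM2r ?ge_min ?lexx // ltW.
  lra.
- (* The shift t = -Re z leaves |Im z|, and |z| + Re z = (Im z)^2 / (|z| - Re z). *)
  have := shift_ge (- Re z); rewrite cmod_Re_shift oppr_ge0 => /(_ (ltW Re_lt0)) cL_le.
  rewrite (ler0_norm (ltW Re_lt0)) in Re_le.
  have addRe_ge0 : 0 <= cmod z + Re z by lra.
  have subRe_le : cmod z - Re z <= 2 * M * L by lra.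
  have cL_ge0 : 0 <= c * L by rewrite mulr_ge0 // ltW.
  have cL_sqr : (c * L) ^+ 2 <= Im z ^+ 2.
    by rewrite -(real_normK (num_real (Im z))) !expr2 ler_pM.
  have Im_sqr : Im z ^+ 2 <= (cmod z + Re z) * (2 * M * L).
    by rewrite -cmod_subRe_addRe mulrC ler_wpM2l.
  have := le_trans cL_sqr Im_sqr.
  have -> : (c * L) ^+ 2 = c ^+ 2 / (2 * M) * L * (2 * M * L).
    by field; rewrite gt_eqF.
  rewrite ler_pM2r ?mulr_gt0 // => ratio_le.
  by apply: le_trans ratio_le; rewrite ler_wpM2r ?ge_min ?lexx ?orbT // ltW.
Qed.

Lemma Re_csqrt (w : R[i]) : Re (csqrt w) = Num.sqrt ((cmod w + Re w) / 2).
Proof. by []. Qed.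

Lemma Re_csqrt_shift_ge (kap M : R) : 0 < kap -> 0 <= M ->
  exists2 C : R, 0 < C &
    forall (z : R[i]) (rho v : R), 0 <= rho -> 0 <= v ->
    kap * (rho + 1) <= cmod z + Re z -> cmod z <= M * (rho + 1) ->
    C * (Num.sqrt rho + 1 + v) <= Re (csqrt ((v ^+ 2)%:C + z)).
Proof.
move=> kap_gt0 M_ge0; set K : R := 1 / 2 + (1 + M) / kap.
have K_gt0 : 0 < K by rewrite /K addr_gt0 ?divr_gt0 //; lra.
exists (Num.sqrt (6 * K))^-1; first by rewrite invr_gt0 sqrtr_gt0 mulr_gt0.
move=> z rho v rho_ge0 v_ge0 addRe_ge z_le.
rewrite Re_csqrt; set w := (v ^+ 2)%:C + z; set f := cmod w + Re w.
have Re_w : Re w = v ^+ 2 + Re z by rewrite ReD.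
have f_ge_z : cmod z + Re z <= f.
  have := ler_cmodD w (- (v ^+ 2)%:C); rewrite cmodN cmod_real /w addrC addKr.
  by rewrite /f Re_w ger0_norm ?sqr_ge0 //; lra.
have f_ge_v : 2 * v ^+ 2 - 2 * M * (rho + 1) <= f.
  have /andP[_ Re_w_le] : - cmod w <= Re w <= cmod w by rewrite -ler_norml ler_normRe_cmod.
  have /andP[Re_z_ge _] : - cmod z <= Re z <= cmod z by rewrite -ler_norml ler_normRe_cmod.
  rewrite /f Re_w in Re_w_le *; lra.
have f_ge0 : 0 <= f by apply: le_trans f_ge_z; apply: le_trans addRe_ge; apply: mulr_ge0; lra.
have L_le : rho + 1 <= f / kap by rewrite ler_pdivlMr // mulrC; lra.
have LM_le : M * (rho + 1) <= M * (f / kap) by rewrite ler_wpM2l.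
have sum_le : rho + 1 + v ^+ 2 <= K * f.
  have -> : K * f = f / 2 + f / kap + M * (f / kap) by rewrite /K; field; rewrite gt_eqF.
  lra.
have sqrt_rho := sqr_sqrtr rho_ge0.
have X_le : (Num.sqrt rho + 1 + v) ^+ 2 <= f / 2 * (6 * K).
  have := sqr_ge0 (Num.sqrt rho - 1); have := sqr_ge0 (Num.sqrt rho - v).
  have := sqr_ge0 (1 - v); nra.
rewrite mulrC ler_pdivrMr ?sqrtr_gt0 ?mulr_gt0 // -sqrtrM; last by rewrite divr_ge0.
by rewrite -[leLHS]ger0_norm ?addr_ge0 ?sqrtr_ge0 // -sqrtr_sqr; apply: ler_wsqrtr.
Qed.

End ReSqrt.

Local Close Scope complex_scope.

Theorem lemma3p13 (R : realType) (N : nat) (a beta theta0 theta r : R) :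
  0 < a -> 0 < r ->
  0 <= theta0 -> theta0 < pi / 2 ->
  `|beta| / Num.sqrt 2 <= tan theta0 ->
  theta0 < theta -> theta < pi / 2 ->
  exists C : R, 0 < C /\
    forall (lam : R[i]), Sigma theta r lam ->
    forall (xi : 'rV[R]_(N.-1)) (j : bool),
      C * (Num.sqrt (cmod lam) + 1 + vnorm xi) <= complex.Re (Lj a beta j lam xi).
Proof.
move=> a_gt0 r_gt0 th0_ge0 th0_lt th0_beta th0_lt_th th_lt.
have th_gt0 : 0 < theta by lra.
have sig_lt_tan : Num.sqrt (beta ^+ 2 / 2) < tan theta.
  rewrite sqrtrM ?sqr_ge0 // sqrtr_sqr sqrtrV //; apply: le_lt_trans th0_beta _.
  have pi_gt0 := pi_gt0 R.
  by rewrite ltr_tan // in_itv /=; apply/andP; split; lra.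
have [k [k_gt0 k_tan k_sig]] := exists_sector_weight (sqrtr_ge0 _) sig_lt_tan.
have [m m_gt0 lam_sector] := sector_weighted_Re_ge th_gt0 th_lt k_gt0 k_tan.
have [c c_gt0 zj_far] := cmod_zj_shift_ge a_gt0 (ltW k_gt0) m_gt0 r_gt0 k_sig.
have M_gt0 : 0 < 1 + `|beta| + a by have := normr_ge0 beta; lra.
have [kap kap_gt0 addRe_ge] := cmod_addRe_ge M_gt0 c_gt0.
have [C C_gt0 Re_sqrt_ge] := Re_csqrt_shift_ge kap_gt0 (ltW M_gt0).
exists C; split=> // lam [_ [lam_arg lam_r]] xi j.
have zj_le := cmod_zj_le beta j lam a_gt0.
apply: Re_sqrt_ge => //; [exact: cmod_ge0 | exact: sqrtr_ge0 |].
apply: addRe_ge => //; first by have := cmod_ge0 lam; lra.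
by move=> t t_ge0; apply: zj_far => //; apply: lam_sector.
Qed.
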